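(* Under the standing assumptions below, suppose $S_1\neq\emptyset$. Then there exists a rank-one idempotent $P\in M_2(\mathbb C)$ such that $\theta(S_1)\subseteq\overline{B}_P(12\delta)\sqcup\overline{B}_{I-P}(12\delta)$ (a disjoint union). Moreover, for $e,f\in S_1$: if $\theta(e),\theta(f)\in\overline B_P(12\delta)$ then $\theta(ef)\in\overline B_P(12\delta)$; if $\theta(e),\theta(f)\in\overline B_{I-P}(12\delta)$ then $\theta(ef)\in\overline B_{I-P}(12\delta)$; if $\theta(e)\in\overline B_P(12\delta)$ and $\theta(f)\in\overline B_{I-P}(12\delta)$ then $ef\in S_0$.
   Context: Standing assumptions: $S$ is a semilattice (commutative semigroup of idempotents), $0\le\delta<0.03$, and $\theta:S\to M_2(\mathbb C)$ satisfies $\|\theta(e)\theta(f)-\theta(ef)\|_{HS}\le\delta$ for all $e,f\in S$, where $\|A\|_{HS}=(\operatorname{tr}(A^*A))^{1/2}$. For $k\in\{0,1,2\}$, $S_k=\{x\in S:\ |\operatorname{tr}\theta(x)-k|<0.95\}$; these sets are pairwise disjoint and cover $S$. $\overline B_A(r)=\{B\in M_2(\mathbb C):\|A-B\|_{HS}\le r\}$. *)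

(* The complex field is modelled by an arbitrary
   numClosedFieldType C (C itself is such a field; algC is the library instance). *)
From HB Require Import structures.
From mathcomp Require Import all_boot all_order all_algebra.
Set Implicit Arguments. Unset Strict Implicit. Unset Printing Implicit Defensive.
Import Order.TTheory GRing.Theory Num.Theory.
Local Open Scope ring_scope.

Definition hs_norm (C : numClosedFieldType) (A : 'M[C]_2) : C :=
  sqrtC (\tr ((map_mx Num.conj A)^T *m A)).

Definition cball (C : numClosedFieldType) (A : 'M[C]_2) (r : C) (B : 'M[C]_2) : Prop :=
  hs_norm (A - B) <= r.

Definition Sk (C : numClosedFieldType) (S : Type) (theta : S -> 'M[C]_2)
  (k : nat) (x : S) : Prop :=
  `|\tr (theta x) - k%:R| < 95 / 100.

From HB Require Import structures.
From mathcomp Require Import all_boot all_order all_algebra.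
From mathcomp Require Import ring lra.
Set Implicit Arguments. Unset Strict Implicit. Unset Printing Implicit Defensive.
Import Order.TTheory GRing.Theory Num.Theory.
Local Open Scope ring_scope.

(* For a 2x2 matrix A with t = tr A write A = (t/2) I + A0 with
   A0 traceless; then A^2 - A = w I + (t - 1) A0 for a scalar w, whence the key
   identity ||A^2 - A||^2 = |t - 1|^2 ||A0||^2 + 2 |w|^2 (hs2_idem_defect).
   From it, for an e-near idempotent A (e <= 0.03) we derive:
   - trace trichotomy: |t - 1| <= 1.5 e, or |t| <= 2 e, or |t - 2| <= 2 e;
   - if |t| is small then ||A|| is small (small_trace_norm_* );
   - if |t - 1| is small then A is within 2.18 e of a rank-one projection
     (near_idem_rank_one_approx), obtained by solving a quadratic equation.
   Every theta x is a delta-near idempotent.  Fixing x0 in S_1 and its nearby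
   projection P, the semilattice identities x (x y) = x y together with the
   facts above place each theta x (x in S_1) in the 12 delta-ball around P or
   around 1 - P, balls at distance about sqrt 2; comparing e, f with e f then
   gives the multiplicative behaviour of the two balls. *)

Section RealSubfield.
Variable C : numClosedFieldType.

(* All moduli and Hilbert-Schmidt
   norms are taken with values here, so that the numerical estimates of the
   proof can be discharged by real arithmetic (lra/nra). *)
Record realC := RealC { rval : C; rvalP : rval \is Num.real }.
HB.instance Definition _ := [isSub for rval].
HB.instance Definition _ := [Choice of realC by <:].
HB.instance Definition _ := [SubChoice_isSubIntegralDomain of realC by <:].
HB.instance Definition _ := [SubIntegralDomain_isSubField of realC by <:].

Lemma rvalD (x y : realC) : rval (x + y) = rval x + rval y. Proof. by []. Qed.
Lemma rvalM (x y : realC) : rval (x * y) = rval x * rval y. Proof. by []. Qed.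
Lemma rvalN (x : realC) : rval (- x) = - rval x. Proof. by []. Qed.
Lemma rval0 : rval (0 : realC) = 0. Proof. by []. Qed.
Lemma rvalV (x : realC) : rval (x^-1) = (rval x)^-1. Proof. by []. Qed.

Definition realC_le (x y : realC) := rval x <= rval y.
Definition realC_lt (x y : realC) := rval x < rval y.
Definition realC_norm (x : realC) : realC := RealC (normr_real (rval x)).

Fact realC_le0_add x y : realC_le 0 x -> realC_le 0 y -> realC_le 0 (x + y).
Proof. by rewrite /realC_le rvalD rval0; apply: addr_ge0. Qed.
Fact realC_le0_mul x y : realC_le 0 x -> realC_le 0 y -> realC_le 0 (x * y).
Proof. by rewrite /realC_le rvalM rval0; apply: mulr_ge0. Qed.
Fact realC_le0_anti x : realC_le 0 x -> realC_le x 0 -> x = 0.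
Proof. by rewrite /realC_le rval0 => h1 h2; apply/val_inj/eqP; rewrite eq_le h1 h2. Qed.
Fact realC_subr_ge0 x y : realC_le 0 (y - x) = realC_le x y.
Proof. by rewrite /realC_le rvalD rvalN rval0 subr_ge0. Qed.
Fact realC_le0_total x : realC_le 0 x || realC_le x 0.
Proof. by rewrite /realC_le rval0; have := rvalP x; rewrite realE. Qed.
Fact realC_normN x : realC_norm (- x) = realC_norm x.
Proof. exact/val_inj/normrN. Qed.
Fact realC_ge0_norm x : realC_le 0 x -> realC_norm x = x.
Proof. by rewrite /realC_le rval0 => h; apply: val_inj; rewrite /= ger0_norm. Qed.
Fact realC_lt_def x y : realC_lt x y = (y != x) && realC_le x y.
Proof. by rewrite /realC_lt /realC_le lt_def. Qed.

HB.instance Definition _ := Num.IntegralDomain_isLeReal.Build realC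
  realC_le0_add realC_le0_mul realC_le0_anti realC_subr_ge0 realC_le0_total
  realC_normN realC_ge0_norm realC_lt_def.

Lemma rval_le (x y : realC) : (x <= y) = (rval x <= rval y). Proof. by []. Qed.
Lemma rval_lt (x y : realC) : (x < y) = (rval x < rval y). Proof. by []. Qed.
Lemma rval_nat (n : nat) : rval (n%:R : realC) = n%:R.
Proof. by elim: n => [//|n IH]; rewrite !mulrS rvalD IH. Qed.
Lemma rvalX (x : realC) n : rval (x ^+ n) = rval x ^+ n.
Proof. by elim: n => [//|n IH]; rewrite !exprS rvalM IH. Qed.
Lemma rval_inj : injective rval. Proof. exact: val_inj. Qed.
Lemma rval_ratio (a b : nat) : rval (a%:R / b%:R : realC) = a%:R / b%:R.
Proof. by rewrite rvalM rvalV !rval_nat. Qed.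

Definition cnorm (z : C) : realC := RealC (normr_real z).

Lemma rval_cnorm z : rval (cnorm z) = `|z|. Proof. by []. Qed.
Lemma cnorm_ge0 z : 0 <= cnorm z. Proof. exact: normr_ge0. Qed.
Lemma cnormM z w : cnorm (z * w) = cnorm z * cnorm w. Proof. exact/val_inj/normrM. Qed.
Lemma ler_cnormD z w : cnorm (z + w) <= cnorm z + cnorm w. Proof. exact: ler_normD. Qed.
Lemma cnormN z : cnorm (- z) = cnorm z. Proof. exact/val_inj/normrN. Qed.
Lemma cnormJ z : cnorm z^* = cnorm z. Proof. exact/val_inj/norm_conjC. Qed.
Lemma cnormV z : cnorm z^-1 = (cnorm z)^-1. Proof. exact/val_inj/normfV. Qed.
Lemma cnorm_nat n : cnorm n%:R = n%:R.
Proof. by apply: val_inj; rewrite /= rval_nat normr_nat. Qed.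
Lemma cnormX2 z : cnorm (z ^+ 2) = cnorm z ^+ 2. Proof. by rewrite !expr2 cnormM. Qed.
Lemma cnorm_sqr z : rval (cnorm z ^+ 2) = z * z^*. Proof. by rewrite rvalX rval_cnorm normCK. Qed.
Lemma cnormB z w : cnorm (z - w) = cnorm (w - z). Proof. by rewrite -cnormN opprB. Qed.
Lemma ler_cnormB z w : cnorm (z - w) <= cnorm z + cnorm w.
Proof. by rewrite -(cnormN w) ler_cnormD. Qed.
Lemma ler_cnorm_sub z w : cnorm z - cnorm w <= cnorm (z - w).
Proof. by rewrite lerBlDr; have := ler_cnormD (z - w) w; rewrite subrK. Qed.
Lemma cnorm_parallelogram x y :
  cnorm (x + y) ^+ 2 + cnorm (x - y) ^+ 2 = 2 * cnorm x ^+ 2 + 2 * cnorm y ^+ 2.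
Proof.
apply: rval_inj; rewrite !rvalD !rvalM !rval_cnorm -!expr2 !normCK (rval_nat 2).
by rewrite rmorphD rmorphB /=; ring.
Qed.

End RealSubfield.

Section RealSquares.
Variable R : realFieldType.

Lemma sqr_le_sqr (a b : R) : 0 <= a -> a <= b -> a ^+ 2 <= b ^+ 2.
Proof. by move=> *; nra. Qed.
Lemma le_of_sqr_le (a b : R) : 0 <= b -> a ^+ 2 <= b ^+ 2 -> a <= b.
Proof. by move=> *; nra. Qed.

(* Cauchy-Schwarz in R^4, via Lagrange's identity. *)
Lemma cauchy_schwarz4 (p1 p2 p3 p4 q1 q2 q3 q4 a b : R) : 0 <= a -> 0 <= b ->
  a ^+ 2 = p1 ^+ 2 + p2 ^+ 2 + p3 ^+ 2 + p4 ^+ 2 ->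
  b ^+ 2 = q1 ^+ 2 + q2 ^+ 2 + q3 ^+ 2 + q4 ^+ 2 ->
  p1 * q1 + p2 * q2 + p3 * q3 + p4 * q4 <= a * b.
Proof.
move=> ha hb ea eb; apply: le_of_sqr_le; first exact: mulr_ge0.
rewrite exprMn ea eb.
have -> : (p1 ^+ 2 + p2 ^+ 2 + p3 ^+ 2 + p4 ^+ 2) * (q1 ^+ 2 + q2 ^+ 2 + q3 ^+ 2 + q4 ^+ 2) =
  (p1 * q1 + p2 * q2 + p3 * q3 + p4 * q4) ^+ 2 +
  ((p1 * q2 - p2 * q1) ^+ 2 + (p1 * q3 - p3 * q1) ^+ 2 + (p1 * q4 - p4 * q1) ^+ 2 +
   (p2 * q3 - p3 * q2) ^+ 2 + (p2 * q4 - p4 * q2) ^+ 2 + (p3 * q4 - p4 * q3) ^+ 2) by ring.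
by rewrite lerDl !addr_ge0 // sqr_ge0.
Qed.

End RealSquares.

Section TwoByTwo.
Variable C : numClosedFieldType.
Local Notation M := 'M[C]_2.
Local Notation realC := (realC C).

Lemma sum_ord2 (F : 'I_2 -> C) : \sum_i F i = F 0 + F 1.
Proof. by rewrite big_ord_recl big_ord1; congr (F _ + F _); apply: val_inj. Qed.
Lemma ord2_cases (i : 'I_2) : i = 0 \/ i = 1.
Proof. by case: i => [[|[|i]] Hi]; [left|right|]; rewrite //; apply: val_inj. Qed.
Lemma eq_mx2 (A B : M) :
  A 0 0 = B 0 0 -> A 0 1 = B 0 1 -> A 1 0 = B 1 0 -> A 1 1 = B 1 1 -> A = B.
Proof.
move=> h00 h01 h10 h11; apply/matrixP => i j.
by case: (ord2_cases i) => ->; case: (ord2_cases j) => ->.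
Qed.
Lemma mxtrace2 (A : M) : \tr A = A 0 0 + A 1 1. Proof. by rewrite /mxtrace sum_ord2. Qed.
Lemma mxtrace2B (X Y : M) : \tr (X - Y) = \tr X - \tr Y.
Proof. by rewrite !mxtrace2 !mxE; ring. Qed.

Definition hs2 (A : M) : realC :=
  cnorm (A 0 0) ^+ 2 + cnorm (A 0 1) ^+ 2 + cnorm (A 1 0) ^+ 2 + cnorm (A 1 1) ^+ 2.

Lemma hs2_ge0 A : 0 <= hs2 A. Proof. by rewrite /hs2 !addr_ge0 // sqr_ge0. Qed.
Lemma hs_norm_trace (A : M) : \tr ((map_mx Num.conj A)^T *m A) = rval (hs2 A).
Proof. by rewrite mxtrace2 !mxE !sum_ord2 !mxE /hs2 !rvalD !cnorm_sqr; ring. Qed.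
Lemma hs_norm_real (A : M) : hs_norm A \is Num.real.
Proof. by rewrite /hs_norm hs_norm_trace; apply: sqrtC_real; apply: hs2_ge0. Qed.

Definition hs (A : M) : realC := RealC (hs_norm_real A).

Lemma rval_hs A : rval (hs A) = hs_norm A. Proof. by []. Qed.
Lemma hs_ge0 A : 0 <= hs A.
Proof. by rewrite rval_le rval_hs /hs_norm hs_norm_trace sqrtC_ge0; apply: hs2_ge0. Qed.
Lemma hs_sqr A : hs A ^+ 2 = hs2 A.
Proof. by apply: rval_inj; rewrite rvalX rval_hs /hs_norm hs_norm_trace sqrtCK. Qed.
Lemma hs_le A r : 0 <= r -> hs2 A <= r ^+ 2 -> hs A <= r.
Proof. by move=> hr h; apply: le_of_sqr_le => //; rewrite hs_sqr. Qed.
Lemma hs2_le A r : hs A <= r -> hs2 A <= r ^+ 2.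
Proof. by move=> h; rewrite -hs_sqr; apply: sqr_le_sqr => //; apply: hs_ge0. Qed.

(* The triangle inequality, from Cauchy-Schwarz on the moduli of the entries. *)
Lemma hsD A B : hs (A + B) <= hs A + hs B.
Proof.
apply: hs_le; first by rewrite addr_ge0 ?hs_ge0.
have entry (z w : C) : cnorm (z + w) ^+ 2 <= (cnorm z + cnorm w) ^+ 2.
  by apply: sqr_le_sqr; [exact: cnorm_ge0 | exact: ler_cnormD].
have := cauchy_schwarz4 (hs_ge0 A) (hs_ge0 B) (hs_sqr A) (hs_sqr B).
have := hs_sqr A; have := hs_sqr B; rewrite /hs2 !mxE.
have := entry (A 0 0) (B 0 0); have := entry (A 0 1) (B 0 1).
have := entry (A 1 0) (B 1 0); have := entry (A 1 1) (B 1 1).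
nra.
Qed.
Lemma hsD3 A B D : hs (A + B + D) <= hs A + hs B + hs D.
Proof. by apply: le_trans (hsD _ _) _; rewrite lerD2r hsD. Qed.
Lemma hsN A : hs (- A) = hs A.
Proof. by apply: rval_inj; rewrite !rval_hs /hs_norm !hs_norm_trace /hs2 !mxE !cnormN. Qed.
Lemma hsB A B : hs (A - B) = hs (B - A).
Proof. by rewrite -hsN opprB. Qed.
Lemma hsBD A B : hs (A - B) <= hs A + hs B.
Proof. by rewrite -(hsN B); apply: hsD. Qed.

(* Writing A = (tr A / 2) I + A0 with A0 traceless: [dev2 A] is the squared
   norm of A0, [devsq A] the scalar A0^2 = -det A0, and [idem_scalar A] the
   scalar part of A^2 - A = idem_scalar A * I + (tr A - 1) A0. *)
Definition dev2 (A : M) : realC :=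
  cnorm (A 0 0 - A 1 1) ^+ 2 / 2 + cnorm (A 0 1) ^+ 2 + cnorm (A 1 0) ^+ 2.
Definition devsq (A : M) : C := ((A 0 0 - A 1 1) / 2) ^+ 2 + A 0 1 * A 1 0.
Definition idem_scalar (A : M) : C := (\tr A) ^+ 2 / 4 - \tr A / 2 + devsq A.

Lemma dev2_ge0 A : 0 <= dev2 A.
Proof. by rewrite /dev2 !addr_ge0 ?divr_ge0 ?sqr_ge0. Qed.

(* Pythagoras for the splitting into scalar and traceless parts. *)
Lemma hs2_split A : hs2 A = cnorm (\tr A) ^+ 2 / 2 + dev2 A.
Proof.
rewrite /hs2 /dev2 mxtrace2; have := cnorm_parallelogram (A 0 0) (A 1 1).
set p := cnorm (_ + _) ^+ 2; set q := cnorm (_ - _) ^+ 2.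
set a := cnorm (A 0 0) ^+ 2; set d := cnorm (A 1 1) ^+ 2 => h.
have -> : p = 2 * a + 2 * d - q by rewrite -h; ring.
by field.
Qed.

(* The eigenvalues of A0 are the square roots of devsq A; their modulus is
   controlled by the norm of A0. *)
Lemma devsq_le A : 2 * cnorm (devsq A) <= dev2 A.
Proof.
rewrite /devsq /dev2.
have := ler_cnormD (((A 0 0 - A 1 1) / 2) ^+ 2) (A 0 1 * A 1 0).
rewrite cnormX2 cnormM cnormM cnormV (cnorm_nat _ 2).
set x := cnorm (A 0 0 - A 1 1); set b := cnorm (A 0 1); set c := cnorm (A 1 0) => h.
have hbc : 0 <= (b - c) ^+ 2 by apply: sqr_ge0.
have e : x ^+ 2 / 2 + b ^+ 2 + c ^+ 2 - 2 * ((x / 2) ^+ 2 + b * c) = (b - c) ^+ 2 by field.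
rewrite -subr_ge0; apply: le_trans hbc _; rewrite -e lerD2l lerN2; nra.
Qed.

Lemma hs2_idem_defect A :
  hs2 (A *m A - A) = cnorm (\tr A - 1) ^+ 2 * dev2 A + 2 * cnorm (idem_scalar A) ^+ 2.
Proof.
rewrite hs2_split.
have -> : \tr (A *m A - A) = 2 * idem_scalar A.
  by rewrite /idem_scalar /devsq !mxtrace2 !mxE !sum_ord2 ?mxE; field.
rewrite cnormM (cnorm_nat _ 2) /dev2 !mxE !sum_ord2 ?mxE.
have -> : A 0 0 * A 0 0 + A 0 1 * A 1 0 - A 0 0 - (A 1 0 * A 0 1 + A 1 1 * A 1 1 - A 1 1)
   = (\tr A - 1) * (A 0 0 - A 1 1) by rewrite mxtrace2; ring.
have -> : A 0 0 * A 0 1 + A 0 1 * A 1 1 - A 0 1 = (\tr A - 1) * A 0 1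
  by rewrite mxtrace2; ring.
have -> : A 1 0 * A 0 0 + A 1 1 * A 1 0 - A 1 0 = (\tr A - 1) * A 1 0
  by rewrite mxtrace2; ring.
by rewrite !cnormM; field.
Qed.

End TwoByTwo.

(* Real estimates on the invariants of a near-idempotent 2x2 matrix A with
   ||A^2 - A|| <= e: s = |tr A - 1|, m = ||A0||^2 and w = |idem_scalar A|
   satisfy s^2 m + 2 w^2 <= e^2 (the key identity). *)
Section NearIdempotentScalars.
Variable R : realFieldType.

Definition idem_invariants (s m w e : R) :=
  [/\ 0 <= s, 0 <= m, 0 <= w, 0 <= e & s ^+ 2 * m + 2 * w ^+ 2 <= e ^+ 2].

Lemma key_dev s m w e : idem_invariants s m w e -> s ^+ 2 * m <= e ^+ 2.
Proof. by case=> _ _ _ _ key; have ? := sqr_ge0 w; lra. Qed.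

Lemma key_scalar s m w e : idem_invariants s m w e -> w <= 7072/10000 * e.
Proof.
case=> s_ge0 m_ge0 w_ge0 e_ge0 key.
have hsm : 0 <= s ^+ 2 * m by rewrite mulr_ge0 ?sqr_ge0.
have h2 : 2 * w ^+ 2 <= e ^+ 2 by lra.
apply: le_of_sqr_le; first lra.
rewrite exprMn; have hc : (1/2 : R) <= (7072/10000) ^+ 2 by rewrite expr2; lra.
have := ler_wpM2r (sqr_ge0 e) hc; lra.
Qed.

(* For e <= 0.12 the trace of A cannot be far from {0, 1, 2}. *)
Lemma trace_not_far s m w e : idem_invariants s m w e ->
  e <= 12/100 -> s ^+ 2 - 1 <= 2 * m + 4 * w -> s < 18/10.
Proof.
move=> inv e12 hX; rewrite ltNge; apply/negP => s18.
have hsm := key_dev inv; have hw := key_scalar inv.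
case: inv => s_ge0 m_ge0 w_ge0 e_ge0 _.
have he2 : e ^+ 2 <= (12/100) ^+ 2 by apply: sqr_le_sqr.
have hs2 : (18/10) ^+ 2 <= s ^+ 2 by apply: sqr_le_sqr => //; lra.
have hma : (18/10) ^+ 2 * m <= s ^+ 2 * m by apply: ler_wpM2r.
move: hs2 hma he2; rewrite !expr2 => hs2 hma he2.
by clear -hw hs2 hma he2 hsm hX e12 e_ge0; lra.
Qed.

(* A trace at distance < 0.95 from 1 is at distance <= 1.5 e from 1:
   bootstrap the lower bound m >= (1 - s^2)/2 - 2w three times. *)
Lemma trace_near_one s m w e : idem_invariants s m w e ->
  e <= 3/100 -> s < 95/100 -> 1 - s ^+ 2 <= 2 * m + 4 * w -> s <= 3/2 * e.
Proof.
move=> inv e3 s95 hX.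
have hw := key_scalar inv; have hsm := key_dev inv.
case: inv => s_ge0 m_ge0 w_ge0 e_ge0 _.
have he2 : e ^+ 2 <= 9/10000.
  by have := sqr_le_sqr e_ge0 e3; rewrite [X in _ <= X]expr2 => h; clear -h; lra.
have hs2 : s ^+ 2 <= 9025/10000.
  by have := sqr_le_sqr s_ge0 (ltW s95); rewrite [X in _ <= X]expr2 => h; clear -h; lra.
have hlow : s ^+ 2 * ((1 - s ^+ 2) / 2 - 2 * w) <= e ^+ 2.
  by apply: le_trans hsm; apply: ler_wpM2l; rewrite ?sqr_ge0 //; clear -hX; lra.
have step c : c <= (1 - s ^+ 2) / 2 - 2 * w -> s ^+ 2 * c <= e ^+ 2.
  by move=> hc; apply: le_trans hlow; apply: ler_wpM2l; rewrite ?sqr_ge0.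
have hsa : s ^+ 2 <= 15/100.
  by have := step (6/1000) ltac:(clear -hw hs2 e3; lra); clear -he2; lra.
have hsb : s ^+ 2 <= 3/1000.
  by have := step (38/100) ltac:(clear -hw hsa e3; lra); clear -he2; lra.
have hsc := step (4/9) ltac:(clear -hw hsb e3; lra).
apply: le_of_sqr_le; first by clear -e_ge0; lra.
rewrite exprMn; have -> : (3/2 : R) ^+ 2 = 9/4 by rewrite expr2; clear; lra.
by clear -hsc; lra.
Qed.

(* A trace at distance >= 0.95 from 1 is within 2e of 0 or of 2; here
   p = |tr A| and q = |tr A - 2|, with p q = |(tr A - 1)^2 - 1|. *)
Lemma trace_near_0_or_2 s m w e p q : idem_invariants s m w e ->
  0 <= p -> 0 <= q -> p * q <= 2 * m + 4 * w -> 2 <= p + q ->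
  e <= 3/100 -> 95/100 <= s -> p <= 2 * e \/ q <= 2 * e.
Proof.
move=> inv hp hq hpq hpq2 e3 s95.
have hw := key_scalar inv; have hsm := key_dev inv.
case: inv => s_ge0 m_ge0 w_ge0 e_ge0 _.
have hs2 : 9025/10000 <= s ^+ 2.
  have h0 : (0 : R) <= 95/100 by lra.
  by have := sqr_le_sqr h0 s95; rewrite [X in X <= _]expr2 => h; clear -h; lra.
have hma : 9025/10000 * m <= s ^+ 2 * m by apply: ler_wpM2r.
have hee : e ^+ 2 <= 3/100 * e by rewrite expr2; apply: ler_wpM2r.
have hX : p * q <= 291/100 * e by clear -hpq hw hma hsm hee e_ge0 m_ge0; lra.
have small (a b : R) : 0 <= a -> a <= b -> 2 <= a + b -> a * b <= 291/100 * e ->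
    a <= 2 * e.
  move=> ha hab hab2 habX.
  have hb1 : a * 1 <= a * b by apply: ler_wpM2l => //; clear -hab hab2; lra.
  have ha1 : a <= 874/10000 by clear -hb1 habX e3; lra.
  have hb2 : a * (19126/10000) <= a * b by apply: ler_wpM2l => //; clear -ha1 hab2; lra.
  by clear -hb2 habX e_ge0; lra.
case: (leP p q) => hle; first by left; exact: small hp hle hpq2 hX.
by right; apply: (small q p hq (ltW hle)); rewrite 1?addrC 1?mulrC.
Qed.

Lemma dev_small_trace s m w e p t : idem_invariants s m w e -> 0 <= p -> 1 - p <= s -> p <= t -> t < 1 ->
  (1 - t) ^+ 2 * m <= e ^+ 2.
Proof.
move=> inv hp hps hpt t1; apply: le_trans (key_dev inv); apply: ler_wpM2r.
  by case: inv.
by apply: sqr_le_sqr; clear -hps hpt t1; lra.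
Qed.

Lemma dev_large s m w e : idem_invariants s m w e ->
  (1 - s ^+ 2) / 2 - 2 * w <= m -> e <= 3/100 -> s <= 3/2 * e -> 45/100 <= m.
Proof.
move=> inv hm0 e3 hse; have hw := key_scalar inv.
case: inv => s_ge0 m_ge0 w_ge0 e_ge0 _.
have hs : s <= 45/1000 by clear -hse e3; lra.
have hs2 : s ^+ 2 <= 3/1000.
  by have := sqr_le_sqr s_ge0 hs; rewrite [X in _ <= X]expr2 => h; clear -h; lra.
by clear -hm0 hs2 hw e3; lra.
Qed.

(* The numerical core of the approximation by a rank-one idempotent:
   g is the ratio by which the traceless part is shrunk. *)
Lemma approx_numeric s m w e g : idem_invariants s m w e -> 0 <= g -> (1 - s ^+ 2) / 2 - 2 * w <= m ->
  g * m <= 2 * (w + s ^+ 2 / 4) -> e <= 3/100 -> s <= 3/2 * e ->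
  s ^+ 2 / 2 + g ^+ 2 * m <= (218/100 * e) ^+ 2.
Proof.
move=> inv hg hm0 hg2 e3 hse.
have hw := key_scalar inv; have hsm := key_dev inv; have hm2 := dev_large inv hm0 e3 hse.
case: inv => s_ge0 m_ge0 w_ge0 e_ge0 key.
have hs2 : s ^+ 2 <= 9/4 * e ^+ 2.
  have := sqr_le_sqr s_ge0 hse; rewrite exprMn.
  by have -> : (3/2 : R) ^+ 2 = 9/4 by rewrite expr2; clear; lra.
have he2 : e ^+ 2 <= 9/10000.
  by have := sqr_le_sqr e_ge0 e3; rewrite [X in _ <= X]expr2 => h; clear -h; lra.
set E := e ^+ 2 in hsm hs2 he2 key *.
have hE : 0 <= E by apply: sqr_ge0.
set U := 2 * w + 9/8 * E.
have hU : (g * m) ^+ 2 <= U ^+ 2.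
  by apply: sqr_le_sqr; rewrite ?mulr_ge0 /U //; clear -hg2 hs2; lra.
have eU : U ^+ 2 = 4 * w ^+ 2 + 9/2 * (w * E) + 81/64 * (E * E) by rewrite /U; field.
have ewE : w * E <= 213/10000 * E.
  by have := ler_wpM2r hE hw; have := ler_wpM2r hE e3; clear -e_ge0 hE; lra.
have hsm0 : 0 <= s ^+ 2 * m by rewrite mulr_ge0 ?sqr_ge0.
have eEw : E * w <= 213/10000 * E by rewrite mulrC.
have eEE : E * E <= E * (9/10000) by apply: ler_wpM2l.
have eEm : E * (4989/10000 - 2 * w) <= E * m.
  by apply: ler_wpM2l => //; clear -hm0 hs2 he2; lra.
have core : s ^+ 2 * m / 2 + U ^+ 2 <= 475/100 * (E * m).
  by rewrite eU; clear -hsm0 key ewE eEw eEE eEm hE; lra.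
have k2 : (475/100 : R) <= (218/100) ^+ 2 by rewrite expr2; clear; lra.
have k3 := ler_wpM2r (mulr_ge0 hE m_ge0) k2.
rewrite exprMn -/E -(ler_pM2r (_ : 0 < m)); last by clear -hm2; lra.
have -> : (s ^+ 2 / 2 + g ^+ 2 * m) * m = s ^+ 2 * m / 2 + (g * m) ^+ 2 by ring.
rewrite -mulrA.
by clear -core k3 hU; lra.
Qed.

End NearIdempotentScalars.

Lemma norm_bound_numeric (R : realFieldType) (p m d a b K L : R) :
  0 <= d -> 0 <= p -> p <= a * d -> 0 <= m -> L * m <= (b * d) ^+ 2 -> 0 < L ->
  a ^+ 2 / 2 + b ^+ 2 / L <= K ^+ 2 -> p ^+ 2 / 2 + m <= (K * d) ^+ 2.
Proof.
move=> hd hp hpa hm hL hL0 hK.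
have h1 : p ^+ 2 <= (a * d) ^+ 2 by apply: sqr_le_sqr.
have h2 : m <= (b * d) ^+ 2 / L by rewrite ler_pdivlMr // mulrC.
have h3 : p ^+ 2 / 2 + m <= (a ^+ 2 / 2 + b ^+ 2 / L) * d ^+ 2.
  have -> : (a ^+ 2 / 2 + b ^+ 2 / L) * d ^+ 2 = (a * d) ^+ 2 / 2 + (b * d) ^+ 2 / L.
    by rewrite !exprMn; field; rewrite lt0r_neq0.
  lra.
by apply: le_trans h3 _; rewrite exprMn; apply: ler_wpM2r; rewrite ?sqr_ge0.
Qed.

Section NearIdempotentMatrix.
Variable C : numClosedFieldType.
Local Notation M := 'M[C]_2.
Local Notation realC := (realC C).

Lemma sqr_sub1_bounds (t : C) :
  1 - cnorm (t - 1) ^+ 2 <= cnorm ((t - 1) ^+ 2 - 1) /\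
  cnorm (t - 1) ^+ 2 - 1 <= cnorm ((t - 1) ^+ 2 - 1).
Proof.
rewrite -cnormX2; split.
  by rewrite cnormB; have := ler_cnorm_sub 1 ((t - 1) ^+ 2); rewrite (cnorm_nat _ 1).
by have := ler_cnorm_sub ((t - 1) ^+ 2) 1; rewrite (cnorm_nat _ 1).
Qed.
Lemma sqr_sub1_factor (t : C) : cnorm t * cnorm (t - 2) = cnorm ((t - 1) ^+ 2 - 1).
Proof. by rewrite -cnormM; congr cnorm; ring. Qed.
Lemma cnorm_dist02 (t : C) : 2 <= cnorm t + cnorm (t - 2).
Proof.
have := ler_cnormB t (t - 2).
have -> : t - (t - 2) = 2 by ring.
by rewrite (cnorm_nat _ 2).
Qed.
Lemma cnorm_dist01 (t : C) : 1 - cnorm t <= cnorm (t - 1).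
Proof.
have := ler_cnormB (t - 1) t.
have -> : t - 1 - t = - 1 by ring.
by rewrite cnormN (cnorm_nat _ 1); lra.
Qed.

Definition trdist1 (A : M) : realC := cnorm (\tr A - 1).

Lemma near_idem_invariants (A : M) e : 0 <= e -> hs (A *m A - A) <= e ->
  idem_invariants (trdist1 A) (dev2 A) (cnorm (idem_scalar A)) e.
Proof.
move=> he hA; split; rewrite ?cnorm_ge0 ?dev2_ge0 //.
by rewrite -hs2_idem_defect; apply: hs2_le.
Qed.

Lemma trace_sqr_sub1_le (A : M) :
  cnorm ((\tr A - 1) ^+ 2 - 1) <= 2 * dev2 A + 4 * cnorm (idem_scalar A).
Proof.
have -> : (\tr A - 1) ^+ 2 - 1 = 4 * (idem_scalar A - devsq A).
  by rewrite /idem_scalar; field.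
rewrite cnormM (cnorm_nat _ 4); have := ler_cnormB (idem_scalar A) (devsq A).
have := devsq_le A; lra.
Qed.

(* How far devsq A is from 1/4, the value it takes on rank-one idempotents. *)
Lemma devsq_quarter (A : M) :
  cnorm (devsq A - 1/4) <= cnorm (idem_scalar A) + trdist1 A ^+ 2 / 4.
Proof.
have -> : devsq A - 1/4 = idem_scalar A - (\tr A - 1) ^+ 2 / 4 by rewrite /idem_scalar; field.
apply: le_trans (ler_cnormB _ _) _.
by rewrite cnormM cnormV (cnorm_nat _ 4) cnormX2 /trdist1; lra.
Qed.

Section Estimates.
Variables (A : M) (e : realC).
Hypotheses (e_ge0 : 0 <= e) (hA : hs (A *m A - A) <= e).

Let inv := near_idem_invariants e_ge0 hA.

Lemma near_idem_trace_near_one : e <= 3/100 -> trdist1 A < 95/100 -> trdist1 A <= 3/2 * e.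
Proof.
move=> e3 s95; have [h _] := sqr_sub1_bounds (\tr A).
exact: (trace_near_one inv e3 s95 (le_trans h (trace_sqr_sub1_le A))).
Qed.

Lemma near_idem_trace_not_far : e <= 12/100 -> trdist1 A < 18/10.
Proof.
move=> e12; have [_ h] := sqr_sub1_bounds (\tr A).
exact: (trace_not_far inv e12 (le_trans h (trace_sqr_sub1_le A))).
Qed.

Lemma near_idem_trace_near_0_or_2 : e <= 3/100 -> 95/100 <= trdist1 A ->
  cnorm (\tr A) <= 2 * e \/ cnorm (\tr A - 2) <= 2 * e.
Proof.
move=> e3 s95; apply: (trace_near_0_or_2 inv) => //; rewrite ?cnorm_ge0 ?cnorm_dist02 //.
by rewrite sqr_sub1_factor trace_sqr_sub1_le.
Qed.

Lemma near_idem_small_trace (d a b K L : realC) : e = b * d -> 0 <= d ->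
  cnorm (\tr A) <= a * d -> a * d < 1 -> 0 < L -> L <= (1 - a * d) ^+ 2 ->
  a ^+ 2 / 2 + b ^+ 2 / L <= K ^+ 2 -> 0 <= K -> hs A <= K * d.
Proof.
move=> ebd hd ht ad1 hL hL2 hnum hK.
have hz := dev_small_trace inv (cnorm_ge0 _) (cnorm_dist01 _) ht ad1.
apply: hs_le; first exact: mulr_ge0.
rewrite hs2_split; apply: (norm_bound_numeric hd (cnorm_ge0 _) ht (dev2_ge0 A) _ hL hnum).
by rewrite -ebd; apply: le_trans hz; apply: ler_wpM2r; rewrite ?dev2_ge0.
Qed.

End Estimates.

Lemma small_trace_norm_491 (A : M) (d : realC) : 0 <= d -> d <= 3/100 ->
  hs (A *m A - A) <= 4 * d -> cnorm (\tr A) <= 3 * d -> hs A <= 491/100 * d.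
Proof.
move=> hd hd3 hA ht.
have hL : 82/100 <= (1 - 3 * d) ^+ 2.
  have h0 : (0 : realC) <= 91/100 by clear; lra.
  have := @sqr_le_sqr _ (91/100) (1 - 3 * d) h0 ltac:(clear -hd3; lra).
  by rewrite !expr2 => h; clear -h; lra.
have hb : 0 <= 4 * d by clear -hd; lra.
apply: (near_idem_small_trace (L := 82/100) hb hA erefl hd ht); first by clear -hd3; lra.
- by clear; lra.
- exact: hL.
- by rewrite !expr2; clear; lra.
- by clear; lra.
Qed.

Lemma small_trace_norm_18 (A : M) (d : realC) : 0 <= d -> d <= 3/100 ->
  hs (A *m A - A) <= d -> cnorm (\tr A) <= 2 * d -> hs A <= 18/10 * d.
Proof.
move=> hd hd3 hA ht.
have hL : 88/100 <= (1 - 2 * d) ^+ 2.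
  have h0 : (0 : realC) <= 94/100 by clear; lra.
  have := @sqr_le_sqr _ (94/100) (1 - 2 * d) h0 ltac:(clear -hd3; lra).
  by rewrite !expr2 => h; clear -h; lra.
have hb : 0 <= 1 * d by clear -hd; lra.
have hA1 : hs (A *m A - A) <= 1 * d by rewrite mul1r.
apply: (near_idem_small_trace (L := 88/100) hb hA1 erefl hd ht); first by clear -hd3; lra.
- by clear; lra.
- exact: hL.
- by rewrite !expr2; clear; lra.
- by clear; lra.
Qed.

Lemma small_trace_norm_87 (A : M) (d : realC) : 0 <= d -> d <= 3/100 ->
  hs (A *m A - A) <= 76/10 * d -> cnorm (\tr A) <= 3 * d -> hs A <= 87/10 * d.
Proof.
move=> hd hd3 hA ht.
have hL : 82/100 <= (1 - 3 * d) ^+ 2.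
  have h0 : (0 : realC) <= 91/100 by clear; lra.
  have := @sqr_le_sqr _ (91/100) (1 - 3 * d) h0 ltac:(clear -hd3; lra).
  by rewrite !expr2 => h; clear -h; lra.
have hb : 0 <= 76/10 * d by clear -hd; lra.
apply: (near_idem_small_trace (L := 82/100) hb hA erefl hd ht); first by clear -hd3; lra.
- by clear; lra.
- exact: hL.
- by rewrite !expr2; clear; lra.
- by clear; lra.
Qed.

End NearIdempotentMatrix.

(* A quadratic a g^2 + m g + c with m > 0 real has a root of modulus at most
   2|c|/m: take g = -2c/(m + r) with r a square root of the discriminant
   of nonnegative real part. *)
Lemma small_root_quadratic (C : numClosedFieldType) (a c m : C) :
  m \is Num.real -> 0 < m -> exists g, a * g ^+ 2 + m * g + c = 0 /\ `|g| * m <= 2 * `|c|.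
Proof.
move=> m_real m_gt0.
pose r0 := sqrtC (m ^+ 2 - 4 * a * c).
pose r := if 0 <= 'Re r0 then r0 else - r0.
have r2 : r ^+ 2 = m ^+ 2 - 4 * a * c by rewrite /r; case: ifP; rewrite ?sqrrN sqrtCK.
have Re_r : 0 <= 'Re r.
  rewrite /r; case: ifP => // /negbT; rewrite raddfN /= oppr_ge0.
  by rewrite (real_leNgt (real0 _) (Creal_Re r0)) negbK => /ltW.
pose D := m + r.
have mD : m <= `|D|.
  apply: le_trans (leif_Re_Creal D).1.
  by rewrite /D raddfD /= (Creal_ReP _ m_real) lerDl.
have D_neq0 : D != 0 by apply: contraTneq mD => ->; rewrite normr0 lt_geF.
exists (- 2 * c / D); split.
  have -> : a * (- 2 * c / D) ^+ 2 + m * (- 2 * c / D) + c =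
      c * (4 * a * c - m ^+ 2 + r ^+ 2) / D ^+ 2 by rewrite /D; field.
  have -> : 4 * a * c - m ^+ 2 + r ^+ 2 = 0 by rewrite r2; ring.
  by rewrite mulr0 mul0r.
apply: le_trans (ler_wpM2l (normr_ge0 _) mD) _.
by rewrite -normrM divfK // normrM normrN normr_nat.
Qed.

Section RankOneProjections.
Variable C : numClosedFieldType.
Local Notation M := 'M[C]_2.
Local Notation realC := (realC C).

(* The matrix with rows (a b) and (c d); locked, so that it is only ever
   evaluated through mk2E. *)
Definition mk2 (a b c d : C) : M := locked
  (\matrix_(i, j) if i == 0 then (if j == 0 then a else b) else (if j == 0 then c else d)).

Lemma mk2E a b c d :
  [/\ mk2 a b c d 0 0 = a, mk2 a b c d 0 1 = b, mk2 a b c d 1 0 = c & mk2 a b c d 1 1 = d].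
Proof. by rewrite /mk2; unlock; rewrite !mxE. Qed.

(* The matrices of trace 1 and determinant 0: exactly the rank-one
   idempotents of M_2. *)
Definition rank_one_proj (P : M) := exists k1 k2 k3 : C,
  P = mk2 (1/2 + k1) k2 k3 (1/2 - k1) /\ k1 ^+ 2 + k2 * k3 = 1/4.

Lemma rank_one_proj_idem P : rank_one_proj P -> P *m P = P.
Proof.
move=> [k1 [k2 [k3 [-> hk]]]]; have [e00 e01 e10 e11] := mk2E (1/2 + k1) k2 k3 (1/2 - k1).
apply: eq_mx2; rewrite !mxE !sum_ord2 ?e00 ?e01 ?e10 ?e11.
- by apply/eqP; rewrite -subr_eq0 -(subrr (1/4 : C)) -{1}hk; apply/eqP; field.
- by field.
- by field.
- by apply/eqP; rewrite -subr_eq0 -(subrr (1/4 : C)) -{1}hk; apply/eqP; field.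
Qed.

Lemma rank_one_proj_compl P : rank_one_proj P -> rank_one_proj (1%:M - P).
Proof.
move=> [k1 [k2 [k3 [-> hk]]]]; exists (- k1), (- k2), (- k3).
split; last by rewrite sqrrN mulrNN.
have [e00 e01 e10 e11] := mk2E (1/2 + k1) k2 k3 (1/2 - k1).
have [f00 f01 f10 f11] := mk2E (1/2 + - k1) (- k2) (- k3) (1/2 - - k1).
by apply: eq_mx2; rewrite !mxE ?e00 ?e01 ?e10 ?e11 ?f00 ?f01 ?f10 ?f11 /=; field.
Qed.

Lemma rank_one_proj_rank P : rank_one_proj P -> \rank P = 1%N.
Proof.
move=> hP; have idemP := rank_one_proj_idem hP.
have trP : \tr P = 1.
  have [k1 [k2 [k3 [-> _]]]] := hP; have [e00 _ _ e11] := mk2E (1/2 + k1) k2 k3 (1/2 - k1).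
  by rewrite mxtrace2 e00 e11; field.
have rank_neq0 : \rank P != 0%N.
  by rewrite mxrank_eq0; apply: contra_eqN trP => /eqP ->; rewrite mxtrace0 eq_sym oner_eq0.
have rank_neq2 : \rank P != 2%N.
  apply/negP => /eqP full.
  have unitP : P \in unitmx by rewrite -row_full_unit /row_full full.
  have P1 : P = 1%:M by have := congr1 (mulmx (invmx P)) idemP; rewrite mulmxA mulVmx ?mul1mx.
  by move: trP; rewrite P1 mxtrace_scalar mulr2n => /eqP; rewrite -subr_eq0 addrK oner_eq0.
by move: (rank_leq_row P) rank_neq0 rank_neq2; case: (\rank P) => [|[|[|n]]].
Qed.

Lemma rank_one_proj_gap P : rank_one_proj P -> 2 <= hs2 (P - (1%:M - P)).
Proof.
move=> [k1 [k2 [k3 [-> hk]]]]; have [e00 e01 e10 e11] := mk2E (1/2 + k1) k2 k3 (1/2 - k1).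
rewrite /hs2 !mxE ?e00 ?e01 ?e10 ?e11 /=.
have -> : 1/2 + k1 - (1 - (1/2 + k1)) = 2 * k1 by field.
have -> : k2 - (0 - k2) = 2 * k2 by ring.
have -> : k3 - (0 - k3) = 2 * k3 by ring.
have -> : 1/2 - k1 - (1 - (1/2 - k1)) = - (2 * k1) by field.
rewrite cnormN !cnormM (cnorm_nat _ 2).
have := ler_cnormD (k1 ^+ 2) (k2 * k3); rewrite hk cnormX2 cnormM cnormM cnormV.
rewrite (cnorm_nat _ 4) (cnorm_nat _ 1) => h.
have := sqr_ge0 (cnorm k2 - cnorm k3); lra.
Qed.

Lemma rank_one_proj_balls P X (a b : realC) : rank_one_proj P ->
  hs (X - P) <= a -> hs (X - (1%:M - P)) <= b -> 2 <= (a + b) ^+ 2.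
Proof.
move=> hP ha hb; apply: le_trans (rank_one_proj_gap hP) _.
have -> : P - (1%:M - P) = (X - (1%:M - P)) - (X - P) by apply: eq_mx2; rewrite !mxE; ring.
apply: hs2_le; apply: le_trans (hsBD _ _) _; lra.
Qed.

(* The candidate projection near A: trace part 1/2, and traceless part
   A0 = [[a, b], [c, -a]] replaced by [[a + g a^*, b + g c^*], [c + g b^*, .]];
   this is a rank-one projection when g solves the quadratic below. *)
Definition proj_near (A : M) (g : C) : M :=
  let a := (A 0 0 - A 1 1) / 2 in
  mk2 (1/2 + (a + g * a^*)) (A 0 1 + g * (A 1 0)^*) (A 1 0 + g * (A 0 1)^*)
      (1/2 - (a + g * a^*)).

Lemma dev2_rval (A : M) :
  rval (dev2 A) = 2 * (((A 0 0 - A 1 1) / 2) * ((A 0 0 - A 1 1) / 2)^*)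
                  + A 0 1 * (A 0 1)^* + A 1 0 * (A 1 0)^*.
Proof.
rewrite /dev2 !rvalD rvalM rvalV (rval_nat _ 2) !cnorm_sqr fmorph_div rmorphB /=.
by rewrite (conjC_nat _ 2); field.
Qed.

Lemma proj_near_rank_one (A : M) g :
  (devsq A)^* * g ^+ 2 + rval (dev2 A) * g + (devsq A - 1/4) = 0 ->
  rank_one_proj (proj_near A g).
Proof.
move=> hg; do 3 eexists; split; first by [].
apply/eqP; rewrite -subr_eq0 -hg dev2_rval /devsq rmorphD rmorphM !rmorphXn /=.
by apply/eqP; ring.
Qed.

Lemma proj_near_trace (A : M) g : \tr (A - proj_near A g) = \tr A - 1.
Proof.
have [e00 _ _ e11] := mk2E (1/2 + ((A 0 0 - A 1 1) / 2 + g * ((A 0 0 - A 1 1) / 2)^*))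
  (A 0 1 + g * (A 1 0)^*) (A 1 0 + g * (A 0 1)^*)
  (1/2 - ((A 0 0 - A 1 1) / 2 + g * ((A 0 0 - A 1 1) / 2)^*)).
by rewrite !mxtrace2 !mxE e00 e11; field.
Qed.

Lemma proj_near_dev2 (A : M) g : dev2 (A - proj_near A g) = cnorm g ^+ 2 * dev2 A.
Proof.
have [e00 e01 e10 e11] := mk2E (1/2 + ((A 0 0 - A 1 1) / 2 + g * ((A 0 0 - A 1 1) / 2)^*))
  (A 0 1 + g * (A 1 0)^*) (A 1 0 + g * (A 0 1)^*)
  (1/2 - ((A 0 0 - A 1 1) / 2 + g * ((A 0 0 - A 1 1) / 2)^*)).
rewrite /dev2 /proj_near !mxE ?e00 ?e01 ?e10 ?e11.
have -> : A 0 0 - (1/2 + ((A 0 0 - A 1 1) / 2 + g * ((A 0 0 - A 1 1) / 2)^*))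
          - (A 1 1 - (1/2 - ((A 0 0 - A 1 1) / 2 + g * ((A 0 0 - A 1 1) / 2)^*)))
        = - (g * (A 0 0 - A 1 1)^*).
  by rewrite fmorph_div /= (conjC_nat _ 2); field.
have -> : A 0 1 - (A 0 1 + g * (A 1 0)^*) = - (g * (A 1 0)^*) by ring.
have -> : A 1 0 - (A 1 0 + g * (A 0 1)^*) = - (g * (A 0 1)^*) by ring.
by rewrite !cnormN !cnormM !cnormJ; field.
Qed.

End RankOneProjections.

Section RankOneApproximation.
Variable C : numClosedFieldType.
Local Notation M := 'M[C]_2.
Local Notation realC := (realC C).

(* An e-near idempotent whose trace is close to 1 lies within 2.18 e of a
   rank-one projection: shrink its traceless part by the small root g of the
   quadratic making proj_near A g a projection. *)
Lemma near_idem_rank_one_approx (A : M) (e : realC) : 0 <= e -> e <= 3/100 ->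
  hs (A *m A - A) <= e -> trdist1 A < 95/100 ->
  exists P, rank_one_proj P /\ hs (A - P) <= 218/100 * e.
Proof.
move=> he he3 hA s95.
have inv := near_idem_invariants he hA.
have hs := near_idem_trace_near_one he hA he3 s95.
have hm0 : (1 - trdist1 A ^+ 2) / 2 - 2 * cnorm (idem_scalar A) <= dev2 A.
  have [h _] := sqr_sub1_bounds (\tr A); have h' := trace_sqr_sub1_le A.
  by rewrite -/(trdist1 A) in h; clear -h h'; lra.
have m_gt0 : 0 < rval (dev2 A).
  by rewrite -rval0 -rval_lt; apply: lt_le_trans (dev_large inv hm0 he3 hs); lra.
have [g [hg groot]] := small_root_quadratic (devsq A)^* (devsq A - 1/4) (rvalP (dev2 A)) m_gt0.
exists (proj_near A g); split; first exact: proj_near_rank_one.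
have hgm : cnorm g * dev2 A <= 2 * (cnorm (idem_scalar A) + trdist1 A ^+ 2 / 4).
  have h := devsq_quarter A.
  suff h2 : cnorm g * dev2 A <= 2 * cnorm (devsq A - 1/4) by clear -h h2; lra.
  by rewrite rval_le !rvalM (rval_nat _ 2) !rval_cnorm.
apply: hs_le; first by clear -he; lra.
rewrite hs2_split proj_near_trace proj_near_dev2 -/(trdist1 A).
exact: approx_numeric inv (cnorm_ge0 g) hm0 hgm he3 hs.
Qed.

End RankOneApproximation.

Section SemilatticeRepresentation.
Variable C : numClosedFieldType.
Local Notation M := 'M[C]_2.
Local Notation realC := (realC C).

Record near_rep (S : Type) (mul : S -> S -> S) (delta : C) (theta : S -> M) : Prop :=
  NearRep {
    rep_mulA : forall x y z, mul x (mul y z) = mul (mul x y) z;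
    rep_mulC : forall x y, mul x y = mul y x;
    rep_mulI : forall x, mul x x = x;
    rep_delta_ge0 : 0 <= delta;
    rep_delta_small : delta < 3 / 100;
    rep_mul : forall e f, hs_norm (theta e *m theta f - theta (mul e f)) <= delta }.

Variables (S : Type) (mul : S -> S -> S) (delta : C) (theta : S -> M).
Hypothesis rep : near_rep mul delta theta.

Lemma absorbl x y : mul x (mul x y) = mul x y.
Proof. by rewrite (rep_mulA rep) (rep_mulI rep). Qed.
Lemma absorbr x y : mul y (mul x y) = mul x y.
Proof. by rewrite (rep_mulC rep x y) absorbl. Qed.

Definition dlt : realC := RealC (ger0_real (rep_delta_ge0 rep)).

Lemma dlt_ge0 : 0 <= dlt. Proof. exact: (rep_delta_ge0 rep). Qed.
Lemma dlt_small : dlt <= 3/100.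
Proof. by rewrite rval_le rval_ratio; apply: ltW (rep_delta_small rep). Qed.

Lemma theta_mul u v : hs (theta u *m theta v - theta (mul u v)) <= dlt.
Proof. exact: (rep_mul rep). Qed.
Lemma theta_idem u : hs (theta u *m theta u - theta u) <= dlt.
Proof. by have := theta_mul u u; rewrite (rep_mulI rep). Qed.

Definition S1 u := trdist1 (theta u) < 95/100.

Lemma S1_trace u : S1 u -> trdist1 (theta u) <= 3/2 * dlt.
Proof. exact: near_idem_trace_near_one dlt_ge0 (theta_idem u) dlt_small. Qed.

Lemma trace_trichotomy u :
  S1 u \/ cnorm (\tr (theta u)) <= 2 * dlt \/ cnorm (\tr (theta u) - 2) <= 2 * dlt.
Proof.
case: (ltP (trdist1 (theta u)) (95/100)) => h; [by left | right].
exact: near_idem_trace_near_0_or_2 dlt_ge0 (theta_idem u) dlt_small h.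
Qed.

Lemma diff_near_idem u v : mul u v = v ->
  hs ((theta u - theta v) *m (theta u - theta v) - (theta u - theta v)) <= 4 * dlt.
Proof.
move=> uv.
have -> : (theta u - theta v) *m (theta u - theta v) - (theta u - theta v) =
  ((theta u *m theta u - theta u) + (theta v *m theta v - theta v)) -
  ((theta u *m theta v - theta v) + (theta v *m theta u - theta v)).
  by apply: eq_mx2; rewrite !mxE !sum_ord2 !mxE; ring.
apply: le_trans (hsBD _ _) _.
have := hsD (theta u *m theta u - theta u) (theta v *m theta v - theta v).
have := hsD (theta u *m theta v - theta v) (theta v *m theta u - theta v).
have := theta_idem u; have := theta_idem v.
have := theta_mul u v; have := theta_mul v u; rewrite (rep_mulC rep v u) uv.
lra.
Qed.

Lemma compl_near_idem u v :
  hs ((1%:M - theta u - theta v) *m (1%:M - theta u - theta v) - (1%:M - theta u - theta v))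
  <= 4 * dlt + 2 * hs (theta (mul u v)).
Proof.
set W := theta (mul u v).
have -> : (1%:M - theta u - theta v) *m (1%:M - theta u - theta v) -
          (1%:M - theta u - theta v) =
  ((theta u *m theta u - theta u) + (theta v *m theta v - theta v)) +
  ((theta u *m theta v - W) + (theta v *m theta u - W)) + (W + W).
  by apply: eq_mx2; rewrite !mxE !sum_ord2 !mxE /=; ring.
apply: le_trans (hsD3 _ _ _) _.
have := hsD (theta u *m theta u - theta u) (theta v *m theta v - theta v).
have := hsD (theta u *m theta v - W) (theta v *m theta u - W).
have := hsD W W; have := theta_idem u; have := theta_idem v.
have := theta_mul u v; have := theta_mul v u; rewrite (rep_mulC rep v u) -/W.
lra.
Qed.

Lemma S1_absorb_close u v : S1 u -> S1 v -> mul u v = v ->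
  hs (theta u - theta v) <= 491/100 * dlt.
Proof.
move=> hu hv uv; apply: small_trace_norm_491 dlt_ge0 dlt_small (diff_near_idem uv) _.
have -> : \tr (theta u - theta v) = (\tr (theta u) - 1) - (\tr (theta v) - 1).
  by rewrite mxtrace2B; ring.
apply: le_trans (ler_cnormB _ _) _.
by have := S1_trace hu; have := S1_trace hv; rewrite /trdist1; lra.
Qed.

Lemma S1_absorb_trace2 u v : S1 u -> cnorm (\tr (theta v) - 2) <= 2 * dlt ->
  mul u v = v -> False.
Proof.
move=> hu hv uv.
have d_ge0 := dlt_ge0; have d_small := dlt_small.
have h4 : 0 <= 4 * dlt by lra.
have h12 : 4 * dlt <= 12/100 by lra.
have hN := near_idem_trace_not_far h4 (diff_near_idem uv) h12.
have hb := S1_trace hu; rewrite /trdist1 in hN hb.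
have := ler_cnormD ((\tr (theta u - theta v) - 1) - (\tr (theta u) - 1)) (\tr (theta v) - 2).
have -> : (\tr (theta u - theta v) - 1) - (\tr (theta u) - 1) + (\tr (theta v) - 2) = - 2.
  by rewrite mxtrace2B; ring.
rewrite cnormN (cnorm_nat _ 2).
have := ler_cnormB (\tr (theta u - theta v) - 1) (\tr (theta u) - 1).
lra.
Qed.

Lemma trace0_small v : cnorm (\tr (theta v)) <= 2 * dlt -> hs (theta v) <= 18/10 * dlt.
Proof. exact: small_trace_norm_18 dlt_ge0 dlt_small (theta_idem v). Qed.

Lemma S1_orthogonal u v : S1 u -> S1 v -> cnorm (\tr (theta (mul u v))) <= 2 * dlt ->
  hs (1%:M - theta u - theta v) <= 87/10 * dlt.
Proof.
move=> hu hv huv; apply: small_trace_norm_87 dlt_ge0 dlt_small _ _.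
  by apply: le_trans (compl_near_idem u v) _; have := trace0_small huv; lra.
have -> : \tr (1%:M - theta u - theta v) = - ((\tr (theta u) - 1) + (\tr (theta v) - 1)).
  by rewrite !mxtrace2 !mxE /= ?mulr1n; ring.
rewrite cnormN; apply: le_trans (ler_cnormD _ _) _.
by have := S1_trace hu; have := S1_trace hv; rewrite /trdist1; lra.
Qed.

Definition ball (Q X : M) := hs (X - Q) <= 12 * dlt.

Lemma balls_apart (Q X : M) (a b : realC) : rank_one_proj Q ->
  hs (X - Q) <= a -> hs (X - (1%:M - Q)) <= b -> a + b <= 33 * dlt -> False.
Proof.
move=> hQ ha hb hab.
have h := rank_one_proj_balls hQ ha hb.
have d_ge0 := dlt_ge0; have d_small := dlt_small.
have hab0 : 0 <= a + b by have := hs_ge0 (X - Q); have := hs_ge0 (X - (1%:M - Q)); lra.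
have := sqr_le_sqr hab0 hab.
have := @sqr_le_sqr _ (33 * dlt) (99/100) ltac:(lra) ltac:(lra).
by rewrite [X in _ <= X]expr2; lra.
Qed.

Lemma complK (Q : M) : 1%:M - (1%:M - Q) = Q.
Proof. by rewrite opprB addrC subrK. Qed.
Lemma ball_split (X Y Q : M) : X - Q = (X - Y) + (Y - Q).
Proof. by rewrite addrA subrK. Qed.
Lemma ball_split_compl (X Y Q : M) : Y - (1%:M - Q) = - (1%:M - X - Y) - (X - Q).
Proof. by apply: eq_mx2; rewrite !mxE; ring. Qed.

Lemma S1_balls_absorb (Q : M) u g : rank_one_proj Q -> S1 u -> S1 g -> mul u g = g ->
  ball Q (theta u) -> ball (1%:M - Q) (theta g) -> False.
Proof.
move=> hQ hu hg ug bu bg; apply: (balls_apart hQ bu (_ : _ <= 491/100 * dlt + 12 * dlt)).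
  rewrite (ball_split _ (theta g)); apply: le_trans (hsD _ _) _.
  by have := S1_absorb_close hu hg ug; rewrite /ball in bg; lra.
by have := dlt_ge0; lra.
Qed.

Lemma S1_ball_orthogonal (Q : M) e f : rank_one_proj Q -> S1 e -> S1 f ->
  cnorm (\tr (theta (mul e f))) <= 2 * dlt -> ball Q (theta e) -> ball Q (theta f) -> False.
Proof.
move=> hQ he hf hef be bf; apply: (balls_apart hQ bf (_ : _ <= 87/10 * dlt + 12 * dlt)).
  rewrite (ball_split_compl (theta e)); apply: le_trans (hsBD _ _) _; rewrite hsN.
  by have := S1_orthogonal he hf hef; rewrite /ball in be; lra.
by have := dlt_ge0; lra.
Qed.

(* Every element of S_1 lies in one of the two balls: compare x with a fixed
   x0 in S_1 (whose image is close to P) through their product x0 x. *)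
Lemma S1_classify x0 P : S1 x0 -> rank_one_proj P -> hs (theta x0 - P) <= 218/100 * dlt ->
  forall x, S1 x -> ball P (theta x) \/ ball (1%:M - P) (theta x).
Proof.
move=> h0 hP near0 x hx.
set y := mul x0 x.
have x0y : mul x0 y = y := absorbl x0 x.
have xy : mul x y = y := absorbr x0 x.
case: (trace_trichotomy y) => [hy | [hy | hy]].
- left; rewrite /ball (ball_split _ (theta y)) (ball_split (theta y) (theta x0)).
  apply: le_trans (hsD _ _) _; have := hsD (theta y - theta x0) (theta x0 - P).
  have := S1_absorb_close hx hy xy; have := S1_absorb_close h0 hy x0y.
  by rewrite hsB; lra.
- right; rewrite /ball (ball_split_compl (theta x0)).
  apply: le_trans (hsBD _ _) _; rewrite hsN.
  by have := S1_orthogonal h0 hx hy; have := dlt_ge0; lra.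
- by case: (S1_absorb_trace2 hx hy xy).
Qed.

Lemma classify_compl P :
  (forall x, S1 x -> ball P (theta x) \/ ball (1%:M - P) (theta x)) ->
  forall x, S1 x -> ball (1%:M - P) (theta x) \/ ball (1%:M - (1%:M - P)) (theta x).
Proof. by move=> hcl x hx; rewrite complK; case: (hcl x hx); [right | left]. Qed.

Lemma S1_ball_mul (Q : M) : rank_one_proj Q ->
  (forall x, S1 x -> ball Q (theta x) \/ ball (1%:M - Q) (theta x)) ->
  forall e f, S1 e -> S1 f -> ball Q (theta e) -> ball Q (theta f) ->
  ball Q (theta (mul e f)).
Proof.
move=> hQ hcl e f he hf be bf; have eg := absorbl e f.
case: (trace_trichotomy (mul e f)) => [hg | [hg | hg]].
- by case: (hcl _ hg) => // bg; case: (S1_balls_absorb hQ he hg eg be bg).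
- by case: (S1_ball_orthogonal hQ he hf hg be bf).
- by case: (S1_absorb_trace2 he hg eg).
Qed.

Lemma S1_cross_mul (P : M) : rank_one_proj P ->
  (forall x, S1 x -> ball P (theta x) \/ ball (1%:M - P) (theta x)) ->
  forall e f, S1 e -> S1 f -> ball P (theta e) -> ball (1%:M - P) (theta f) ->
  cnorm (\tr (theta (mul e f))) < 95/100.
Proof.
move=> hP hcl e f he hf be bf.
have eg := absorbl e f; have fg := absorbr e f.
case: (trace_trichotomy (mul e f)) => [hg | [hg | hg]].
- case: (hcl _ hg) => bg; exfalso; last exact: S1_balls_absorb hP he hg eg be bg.
  apply: (S1_balls_absorb (rank_one_proj_compl hP) hf hg fg bf).
  by rewrite complK.
- by have := dlt_small; lra.
- by case: (S1_absorb_trace2 he hg eg).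
Qed.

Lemma ballE (Q X : M) : cball Q (12 * delta) X <-> ball Q X.
Proof. by rewrite /cball /ball hsB rval_le rvalM (rval_nat _ 12). Qed.
Lemma Sk1E u : Sk theta 1 u <-> S1 u.
Proof. by rewrite /Sk /S1 /trdist1 rval_lt rval_ratio /= mulr1n. Qed.
Lemma Sk0E u : Sk theta 0 u <-> cnorm (\tr (theta u)) < 95/100.
Proof. by rewrite /Sk rval_lt rval_ratio /= mulr0n subr0. Qed.

End SemilatticeRepresentation.

Unset Implicit Arguments.
Theorem propositionp (C : numClosedFieldType) (S : Type) (mul : S -> S -> S)
  (mulA : forall x y z, mul x (mul y z) = mul (mul x y) z)
  (mulC : forall x y, mul x y = mul y x)
  (mulI : forall x, mul x x = x)
  (delta : C) (hd0 : 0 <= delta) (hd1 : delta < 3 / 100)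
  (theta : S -> 'M[C]_2)
  (htheta : forall e f : S,
     hs_norm (theta e *m theta f - theta (mul e f)) <= delta)
  (hS1 : exists x, Sk theta 1 x) :
  exists P : 'M[C]_2,
    [/\ P *m P = P, \rank P = 1%N,
      (forall x, Sk theta 1 x ->
         cball P (12 * delta) (theta x) \/ cball (1%:M - P) (12 * delta) (theta x)),
      (forall A : 'M[C]_2,
         ~ (cball P (12 * delta) A /\ cball (1%:M - P) (12 * delta) A)) &
      (forall e f, Sk theta 1 e -> Sk theta 1 f ->
         [/\ cball P (12 * delta) (theta e) -> cball P (12 * delta) (theta f) ->
               cball P (12 * delta) (theta (mul e f)),
             cball (1%:M - P) (12 * delta) (theta e) ->
             cball (1%:M - P) (12 * delta) (theta f) ->
               cball (1%:M - P) (12 * delta) (theta (mul e f)) &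
             cball P (12 * delta) (theta e) ->
             cball (1%:M - P) (12 * delta) (theta f) ->
               Sk theta 0 (mul e f)])].
Proof.
have rep : near_rep mul delta theta by split.
have [x0 /Sk1E hx0] := hS1.
have [P [hP near_x0]] :=
  near_idem_rank_one_approx (dlt_ge0 rep) (dlt_small rep) (theta_idem rep x0) hx0.
have hcl := S1_classify hx0 hP near_x0.
exists P; split.
- exact: rank_one_proj_idem.
- exact: rank_one_proj_rank.
- by move=> x /Sk1E hx; rewrite !(ballE rep); apply: hcl.
- move=> X; rewrite !(ballE rep) => -[bP bQ].
  by apply: (balls_apart (rep := rep) hP bP bQ); have := dlt_ge0 rep; lra.
- move=> e f /Sk1E he /Sk1E hf; split; rewrite !(ballE rep).
  + exact: (S1_ball_mul hP hcl he hf).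
  + exact: (S1_ball_mul (rank_one_proj_compl hP) (classify_compl hcl) he hf).
  + by move=> be bf; apply/Sk0E; exact: (S1_cross_mul hP hcl he hf be bf).
Qed.
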